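(* Let $\gamma$ be an isophotic curve on a smooth oriented surface $M\subset E^3$ with $k_g\equiv 0$, nowhere-vanishing normal curvature, and whose position vector always lies in the plane spanned by $\{T,V\}$. Then $\gamma$ is a slant helix if and only if $\gamma$ is a rectifying curve.
   Context: For a unit speed curve $\gamma$ on an oriented surface $M\subset E^3$, the Darboux frame is $T=\gamma'$, $U$ = unit normal of $M$ along $\gamma$, $V = U\times T$, satisfying $T' = k_g V + k_n U$, $V' = -k_g T + \tau_g U$, $U' = -k_n T - \tau_g V$; here $k_g$, $k_n$, $\tau_g$ are the geodesic curvature, normal curvature and geodesic torsion. The curve $\gamma$ is an isophotic curve if there is a fixed unit vector $d$ and a constant angle $\phi$ with $\langle U, d\rangle = \cos\phi$ along $\gamma$. ''Position vector lies in the plane spanned by $\{T,V\}$'' means $\gamma(s) = \mu_1(s)T(s) + \mu_2(s)V(s)$ for differentiable functions $\mu_1,\mu_2$. With Frenet frame $\{T,N,B\}$, curvature $\kappa>0$ and torsion $\tau$: $\gamma$ is a slant helix if its principal normal $N$ makes a constant angle with a fixed direction (equivalently, $\frac{\kappa^2}{(\kappa^2+\tau^2)^{3/2}}(\tau/\kappa)'$ is constant); $\gamma$ is a rectifying curve if its position vector always lies in its rectifying plane $\mathrm{span}\{T,B\}$ (equivalently, $\tau/\kappa = c_1 s + c_2$ for constants $c_1\neq 0$, $c_2$). *)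

From Stdlib Require Import Reals.
From Coquelicot Require Import Coquelicot.
Open Scope R_scope.

Definition vec := (R * R * R)%type.
Definition vx (v : vec) : R := fst (fst v).
Definition vy (v : vec) : R := snd (fst v).
Definition vz (v : vec) : R := snd v.

Definition vadd (u v : vec) : vec := (vx u + vx v, vy u + vy v, vz u + vz v).
Definition vscale (c : R) (v : vec) : vec := (c * vx v, c * vy v, c * vz v).
Definition dot (u v : vec) : R := vx u * vx v + vy u * vy v + vz u * vz v.
Definition cross (u v : vec) : vec :=
  (vy u * vz v - vz u * vy v, vz u * vx v - vx u * vz v, vx u * vy v - vy u * vx v).
Definition vnorm (v : vec) : R := sqrt (dot v v).

Definition Dv (f : R -> vec) (s : R) : vec :=
  (Derive (fun t => vx (f t)) s, Derive (fun t => vy (f t)) s,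
   Derive (fun t => vz (f t)) s).

Definition smooth_fun_on (a b : R) (f : R -> R) : Prop :=
  forall (k : nat) (s : R), a < s < b -> ex_derive (Derive_n f k) s.

Definition smooth_on (a b : R) (f : R -> vec) : Prop :=
  smooth_fun_on a b (fun t => vx (f t)) /\
  smooth_fun_on a b (fun t => vy (f t)) /\
  smooth_fun_on a b (fun t => vz (f t)).

Definition Tf (gamma : R -> vec) : R -> vec := Dv gamma.
Definition Nf (gamma : R -> vec) (s : R) : vec :=
  vscale (/ vnorm (Dv (Tf gamma) s)) (Dv (Tf gamma) s).
Definition Bf (gamma : R -> vec) (s : R) : vec := cross (Tf gamma s) (Nf gamma s).

Definition Vf (gamma U : R -> vec) (s : R) : vec := cross (U s) (Tf gamma s).
Definition geod_curv (gamma U : R -> vec) (s : R) : R :=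
  dot (Dv (Tf gamma) s) (Vf gamma U s).
Definition normal_curv (gamma U : R -> vec) (s : R) : R :=
  dot (Dv (Tf gamma) s) (U s).

(** Unit-speed curve on (a,b), lying on an oriented surface with unit normal
    field U along it (U smooth, unit, orthogonal to T). *)
Definition unit_speed_on (a b : R) (gamma : R -> vec) : Prop :=
  forall s, a < s < b -> vnorm (Tf gamma s) = 1.

Definition surface_normal_along (a b : R) (gamma U : R -> vec) : Prop :=
  smooth_on a b U /\
  forall s, a < s < b -> vnorm (U s) = 1 /\ dot (U s) (Tf gamma s) = 0.

Definition isophotic (a b : R) (gamma U : R -> vec) : Prop :=
  exists (d : vec) (phi : R), vnorm d = 1 /\
    forall s, a < s < b -> dot (U s) d = cos phi.

Definition position_in_TV_plane (a b : R) (gamma U : R -> vec) : Prop :=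
  exists mu1 mu2 : R -> R,
    (forall s, a < s < b -> ex_derive mu1 s /\ ex_derive mu2 s) /\
    forall s, a < s < b ->
      gamma s = vadd (vscale (mu1 s) (Tf gamma s)) (vscale (mu2 s) (Vf gamma U s)).

Definition slant_helix (a b : R) (gamma : R -> vec) : Prop :=
  exists (d : vec) (theta : R), vnorm d = 1 /\
    forall s, a < s < b -> dot (Nf gamma s) d = cos theta.

Definition rectifying (a b : R) (gamma : R -> vec) : Prop :=
  forall s, a < s < b -> exists l1 l2 : R,
    gamma s = vadd (vscale l1 (Tf gamma s)) (vscale l2 (Bf gamma s)).

From Stdlib Require Import Reals Ranalysis5 Lra Psatz.
From Coquelicot Require Import Coquelicot.
Open Scope R_scope.

(** Since the curve is unit speed, its acceleration T' is
    orthogonal to T; since k_g = <T', V> = 0 it is also orthogonal to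
    V = U x T, hence T' = k_n U (T, U, V is an orthonormal frame).  As k_n
    never vanishes, the principal normal is N = sgn(k_n) U, and then
    B = T x N = -sgn(k_n) V.  Consequently:
    - the position vector mu1 T + mu2 V equals mu1 T - sgn(k_n) mu2 B, so the
      curve is rectifying;
    - k_n is continuous and nowhere zero on the interval, so sgn(k_n) is a
      constant sigma (intermediate value theorem), and <N, sigma d> =
      <U, d> = cos phi, so the curve is a slant helix with axis sigma d.
    Both properties therefore hold, which gives the equivalence. *)

Lemma dot_comm (u v : vec) : dot u v = dot v u.
Proof. unfold dot; ring. Qed.

Lemma dot_self_of_unit (v : vec) : vnorm v = 1 -> dot v v = 1.
Proof.
  unfold vnorm; intro Hv.
  assert (Hpos : 0 <= dot v v).
  { destruct v as [[x y] z]; unfold dot, vx, vy, vz; simpl; nra. }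
  rewrite <- (sqrt_sqrt _ Hpos), Hv; ring.
Qed.

Lemma vnorm_scale_unit (c : R) (v : vec) : dot v v = 1 -> vnorm (vscale c v) = Rabs c.
Proof.
  intro Hv; unfold vnorm.
  replace (dot (vscale c v) (vscale c v)) with (Rsqr c * dot v v).
  - rewrite Hv, Rmult_1_r; apply sqrt_Rsqr_abs.
  - destruct v as [[x y] z]; unfold dot, vscale, vx, vy, vz, Rsqr; simpl; ring.
Qed.

(** The square of the triple product is the Gram determinant of t, u, x. *)
Lemma triple_product_sq (t u x : vec) :
  (dot x (cross u t)) ^ 2 =
    dot t t * dot u u * dot x x + 2 * dot t u * dot u x * dot x t
    - dot t t * (dot u x) ^ 2 - dot u u * (dot x t) ^ 2 - dot x x * (dot t u) ^ 2.
Proof.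
  destruct t as [[t1 t2] t3], u as [[u1 u2] u3], x as [[x1 x2] x3].
  unfold dot, cross, vx, vy, vz; simpl; ring.
Qed.

Lemma orthogonal_to_frame (t u x : vec) :
  dot t t = 1 -> dot u u = 1 -> dot t u = 0 ->
  dot x t = 0 -> dot x u = 0 -> dot x (cross u t) = 0 -> x = (0, 0, 0).
Proof.
  intros Ht Hu Htu Hxt Hxu Hxv.
  assert (Hgram := triple_product_sq t u x).
  rewrite Hxv, Ht, Hu, Htu, Hxt, (dot_comm u x), Hxu in Hgram.
  destruct x as [[x1 x2] x3]; unfold dot, vx, vy, vz in Hgram; simpl in Hgram.
  assert (x1 = 0) by nra; assert (x2 = 0) by nra; assert (x3 = 0) by nra.
  subst; reflexivity.
Qed.

Lemma dot_add_scale (w u v : vec) (c : R) :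
  dot (vadd w (vscale c u)) v = dot w v + c * dot u v.
Proof.
  destruct w as [[w1 w2] w3], u as [[u1 u2] u3], v as [[v1 v2] v3].
  unfold dot, vadd, vscale, vx, vy, vz; simpl; ring.
Qed.

(** In an orthonormal frame t, u, u x t, a vector orthogonal to t and to
    u x t is a multiple of u: w - <w, u> u is orthogonal to the whole frame. *)
Lemma parallel_to_frame_vector (t u w : vec) :
  dot t t = 1 -> dot u u = 1 -> dot t u = 0 ->
  dot w t = 0 -> dot w (cross u t) = 0 -> w = vscale (dot w u) u.
Proof.
  intros Ht Hu Htu Hwt Hwv.
  assert (Hut : dot u t = 0) by (rewrite dot_comm; exact Htu).
  assert (Huv : dot u (cross u t) = 0).
  { destruct t as [[t1 t2] t3], u as [[u1 u2] u3].
    unfold dot, cross, vx, vy, vz; simpl; ring. }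
  assert (Hx : vadd w (vscale (- dot w u) u) = (0, 0, 0)).
  { apply (orthogonal_to_frame t u _ Ht Hu Htu); rewrite dot_add_scale.
    - rewrite Hwt, Hut; ring.
    - rewrite Hu; ring.
    - rewrite Hwv, Huv; ring. }
  destruct u as [[u1 u2] u3], w as [[w1 w2] w3].
  unfold vadd, vscale, vx, vy, vz in *; simpl in *.
  injection Hx; intros; f_equal; [f_equal|]; lra.
Qed.

Lemma cross_swap_sign (t u : vec) (c : R) :
  c * c = 1 -> cross u t = vscale (- c) (cross t (vscale c u)).
Proof.
  intro Hc; destruct t as [[t1 t2] t3], u as [[u1 u2] u3].
  unfold cross, vscale, vx, vy, vz; simpl.
  f_equal; [f_equal|]; rewrite <- (Rmult_1_l (_ - _)), <- Hc; ring.
Qed.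

Definition sgn (x : R) : R := x / Rabs x.

Lemma sgn_sq (x : R) : x <> 0 -> sgn x * sgn x = 1.
Proof.
  intro Hx; unfold sgn.
  assert (Habs : Rabs x <> 0) by (apply Rabs_no_R0; exact Hx).
  replace (x / Rabs x * (x / Rabs x)) with (Rsqr x / Rsqr (Rabs x))
    by (unfold Rsqr; field; exact Habs).
  rewrite <- Rsqr_abs; field; unfold Rsqr; intro H0; apply Hx; nra.
Qed.

Lemma sgn_eq_of_mul_pos (x y : R) : 0 < x * y -> sgn x = sgn y.
Proof.
  intro Hxy; unfold sgn.
  destruct (Rlt_or_le 0 x) as [Hx | Hx].
  - assert (0 < y) by nra.
    rewrite !Rabs_pos_eq by lra; field; split; lra.
  - assert (Hx0 : x < 0) by (destruct Hx as [Hx | Hx]; [exact Hx | subst; lra]).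
    assert (y < 0) by nra.
    rewrite !Rabs_left by lra; field; split; lra.
Qed.

Lemma locally_in_interval (a b s : R) : a < s < b -> locally s (fun t => a < t < b).
Proof.
  intro Hs.
  apply (open_and (fun t => a < t) (fun t => t < b)); [apply open_gt | apply open_lt | exact Hs].
Qed.

(** A continuous, nowhere vanishing function on an interval has constant
    sign (intermediate value theorem). *)
Lemma nonvanishing_constant_sign (a b : R) (f : R -> R) :
  (forall s, a < s < b -> continuity_pt f s) -> (forall s, a < s < b -> f s <> 0) ->
  forall s t, a < s < b -> a < t < b -> 0 < f s * f t.
Proof.
  intros Hc Hnz.
  assert (Hlt : forall s t, a < s < b -> a < t < b -> s < t -> 0 < f s * f t).
  { intros s t Hs Ht Hst.
    assert (Hin : forall x, s <= x <= t -> a < x < b) by (intros; lra).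
    destruct (Rlt_or_le 0 (f s * f t)) as [Hpos | Hneg]; [exact Hpos | exfalso].
    assert (Hfs := Hnz s Hs); assert (Hft := Hnz t Ht).
    destruct (Rlt_or_le (f s) 0) as [Hs0 | Hs0].
    - assert (Ht0 : 0 < f t) by nra.
      destruct (IVT_interv f s t (fun x Hx => Hc x (Hin x Hx)) Hst Hs0 Ht0) as [z [Hz Hfz]].
      exact (Hnz z (Hin z Hz) Hfz).
    - assert (Hcopp : forall x, s <= x <= t -> continuity_pt (fun y => - f y) x)
        by (intros x Hx; apply continuity_pt_opp, Hc, Hin, Hx).
      assert (Hs1 : - f s < 0) by (destruct Hs0; [lra | congruence]).
      assert (Ht1 : 0 < - f t) by nra.
      destruct (IVT_interv (fun y => - f y) s t Hcopp Hst Hs1 Ht1) as [z [Hz Hfz]].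
      apply (Hnz z (Hin z Hz)); lra. }
  intros s t Hs Ht.
  destruct (Rtotal_order s t) as [Hst | [Hst | Hst]].
  - exact (Hlt s t Hs Ht Hst).
  - subst; apply Rsqr_pos_lt, Hnz, Ht.
  - rewrite Rmult_comm; exact (Hlt t s Ht Hs Hst).
Qed.

Lemma is_derive_sum_squares (p q r : R -> R) (s dp dq dr : R) :
  is_derive p s dp -> is_derive q s dq -> is_derive r s dr ->
  is_derive (fun t => p t * p t + q t * q t + r t * r t) s
            (2 * (dp * p s + dq * q s + dr * r s)).
Proof.
  intros Hp Hq Hr.
  replace (2 * (dp * p s + dq * q s + dr * r s)) with
    (dp * p s + p s * dp + (dq * q s + q s * dq) + (dr * r s + r s * dr)) by ring.
  assert (Hcomm : forall x y : R_AbsRing, mult x y = mult y x) by (intros; apply Rmult_comm).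
  exact (is_derive_plus _ _ _ _ _
           (is_derive_plus _ _ _ _ _ (is_derive_mult _ _ _ _ _ Hp Hp Hcomm)
              (is_derive_mult _ _ _ _ _ Hq Hq Hcomm))
           (is_derive_mult _ _ _ _ _ Hr Hr Hcomm)).
Qed.

Lemma unit_speed_acceleration_orthogonal (a b : R) (gamma : R -> vec) (s : R) :
  smooth_on a b gamma -> unit_speed_on a b gamma -> a < s < b ->
  dot (Dv (Tf gamma) s) (Tf gamma s) = 0.
Proof.
  intros [Hx [Hy Hz]] Hunit Hs.
  set (fx := fun t => vx (gamma t)); set (fy := fun t => vy (gamma t));
    set (fz := fun t => vz (gamma t)).
  change (Derive (Derive fx) s * Derive fx s + Derive (Derive fy) s * Derive fy s
          + Derive (Derive fz) s * Derive fz s = 0).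
  assert (Hderiv := is_derive_sum_squares _ _ _ s _ _ _
    (Derive_correct _ _ (Hx 1%nat s Hs : ex_derive (Derive fx) s))
    (Derive_correct _ _ (Hy 1%nat s Hs : ex_derive (Derive fy) s))
    (Derive_correct _ _ (Hz 1%nat s Hs : ex_derive (Derive fz) s))).
  assert (Hconst : is_derive (fun t => Derive fx t * Derive fx t + Derive fy t * Derive fy t
                                       + Derive fz t * Derive fz t) s 0).
  { apply (is_derive_ext_loc (fun _ => 1)).
    - apply (filter_imp (fun t => a < t < b)); [| exact (locally_in_interval a b s Hs)].
      intros t Ht; symmetry; exact (dot_self_of_unit _ (Hunit t Ht)).
    - exact (is_derive_const (K := R_AbsRing) (V := R_NormedModule) 1 s). }
  assert (Heq := eq_trans (eq_sym (is_derive_unique _ _ _ Hderiv))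
                          (is_derive_unique _ _ _ Hconst)).
  lra.
Qed.

Lemma normal_curv_continuous (a b : R) (gamma U : R -> vec) (s : R) :
  smooth_on a b gamma -> surface_normal_along a b gamma U -> a < s < b ->
  continuity_pt (normal_curv gamma U) s.
Proof.
  intros [Hx [Hy Hz]] [[Ux [Uy Uz]] _] Hs.
  apply continuity_pt_filterlim.
  change (continuous (fun t => plus (plus
      (mult (Derive (Derive (fun t => vx (gamma t))) t) (vx (U t)))
      (mult (Derive (Derive (fun t => vy (gamma t))) t) (vy (U t))))
      (mult (Derive (Derive (fun t => vz (gamma t))) t) (vz (U t)))) s).
  apply (continuous_plus (K := R_AbsRing) (V := R_NormedModule));
    [apply (continuous_plus (K := R_AbsRing) (V := R_NormedModule)) |];
    apply (continuous_mult (K := R_AbsRing));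
    apply (ex_derive_continuous (K := R_AbsRing) (V := R_NormedModule)).
  - exact (Hx 2%nat s Hs).
  - exact (Ux 0%nat s Hs).
  - exact (Hy 2%nat s Hs).
  - exact (Uy 0%nat s Hs).
  - exact (Hz 2%nat s Hs).
  - exact (Uz 0%nat s Hs).
Qed.

Section GeodesicCurve.

Variables (a b : R) (gamma U : R -> vec).
Hypothesis smooth_gamma : smooth_on a b gamma.
Hypothesis unit_speed : unit_speed_on a b gamma.
Hypothesis normal_along : surface_normal_along a b gamma U.
Hypothesis geodesic : forall s, a < s < b -> geod_curv gamma U s = 0.
Hypothesis kn_nonzero : forall s, a < s < b -> normal_curv gamma U s <> 0.

(** With k_g = 0 the Darboux equation reduces to T' = k_n U. *)
Lemma geodesic_acceleration (s : R) :
  a < s < b -> Dv (Tf gamma) s = vscale (normal_curv gamma U s) (U s).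
Proof.
  intro Hs; destruct normal_along as [_ HU]; destruct (HU s Hs) as [HUunit HUT].
  apply (parallel_to_frame_vector (Tf gamma s)).
  - exact (dot_self_of_unit _ (unit_speed s Hs)).
  - exact (dot_self_of_unit _ HUunit).
  - rewrite dot_comm; exact HUT.
  - exact (unit_speed_acceleration_orthogonal a b gamma s smooth_gamma unit_speed Hs).
  - exact (geodesic s Hs).
Qed.

Lemma principal_normal_eq (s : R) :
  a < s < b -> Nf gamma s = vscale (sgn (normal_curv gamma U s)) (U s).
Proof.
  intro Hs; unfold Nf, sgn; rewrite (geodesic_acceleration s Hs).
  destruct normal_along as [_ HU]; destruct (HU s Hs) as [HUunit _].
  rewrite (vnorm_scale_unit _ _ (dot_self_of_unit _ HUunit)).
  destruct (U s) as [[x y] z]; unfold vscale, vx, vy, vz, Rdiv; simpl.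
  f_equal; [f_equal|]; ring.
Qed.

Lemma darboux_V_eq (s : R) :
  a < s < b -> Vf gamma U s = vscale (- sgn (normal_curv gamma U s)) (Bf gamma s).
Proof.
  intro Hs; unfold Vf, Bf; rewrite (principal_normal_eq s Hs).
  exact (cross_swap_sign _ _ _ (sgn_sq _ (kn_nonzero s Hs))).
Qed.

Lemma rectifying_of_TV_plane : position_in_TV_plane a b gamma U -> rectifying a b gamma.
Proof.
  intros [mu1 [mu2 [_ Hpos]]] s Hs.
  exists (mu1 s), (- sgn (normal_curv gamma U s) * mu2 s).
  rewrite (Hpos s Hs), (darboux_V_eq s Hs).
  destruct (Bf gamma s) as [[x y] z]; unfold vadd, vscale, vx, vy, vz; simpl.
  f_equal; [f_equal|]; ring.
Qed.

(** If U makes a constant angle with d, then N makes the same constant angle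
    with sigma d, where sigma is the (constant) sign of k_n. *)
Lemma slant_helix_of_isophotic : a < b -> isophotic a b gamma U -> slant_helix a b gamma.
Proof.
  intros Hab [d [phi [Hd Hangle]]].
  set (s0 := (a + b) / 2); assert (Hs0 : a < s0 < b) by (unfold s0; lra).
  set (sigma := sgn (normal_curv gamma U s0)).
  assert (Hsigma2 : sigma * sigma = 1) by exact (sgn_sq _ (kn_nonzero s0 Hs0)).
  assert (Hsign : forall s, a < s < b -> sgn (normal_curv gamma U s) = sigma).
  { intros s Hs; apply sgn_eq_of_mul_pos.
    apply (nonvanishing_constant_sign a b); auto.
    intros t Ht; exact (normal_curv_continuous a b gamma U t smooth_gamma normal_along Ht). }
  exists (vscale sigma d), phi; split.
  - rewrite (vnorm_scale_unit _ _ (dot_self_of_unit _ Hd)).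
    destruct (Rle_or_lt 0 sigma); [rewrite Rabs_pos_eq | rewrite Rabs_left]; nra.
  - intros s Hs; rewrite (principal_normal_eq s Hs), (Hsign s Hs), <- (Hangle s Hs).
    destruct (U s) as [[x y] z], d as [[p q] r]; unfold dot, vscale, vx, vy, vz; simpl.
    transitivity (sigma * sigma * (x * p + y * q + z * r)); [ring | rewrite Hsigma2; ring].
Qed.

End GeodesicCurve.

Theorem theorem4p4 (a b : R) (gamma U : R -> vec) :
  a < b ->
  smooth_on a b gamma ->
  unit_speed_on a b gamma ->
  surface_normal_along a b gamma U ->
  isophotic a b gamma U ->
  (forall s, a < s < b -> geod_curv gamma U s = 0) ->
  (forall s, a < s < b -> normal_curv gamma U s <> 0) ->
  position_in_TV_plane a b gamma U ->
  (slant_helix a b gamma <-> rectifying a b gamma).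
Proof.
  intros Hab Hsmooth Hunit Hnormal Hiso Hgeod Hkn Hpos.
  split; intros _.
  - exact (rectifying_of_TV_plane a b gamma U Hsmooth Hunit Hnormal Hgeod Hkn Hpos).
  - exact (slant_helix_of_isophotic a b gamma U Hsmooth Hunit Hnormal Hgeod Hkn Hab Hiso).
Qed.
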